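(* If a policy in $\Pi$ satisfies $$\sum_{l=1}^m f_{l,\eta}\le\frac{\sum_{l=1}^m\mu_{\eta(l)}}{\sum_{l=1}^n\mu_{l}}\qquad\text{for all }m\in[n],\ \eta\in\mathcal S_n,$$ then it is throughput optimal, i.e. the Markov chain $\{\mathbf X(t)\}_{t\ge0}$ is positive recurrent for every arrival process (as in the model) with $n\lambda<\sum_{l=1}^n\mu_l$.
   Context: Model. Fix $n\ge1$, $[n]=\{1,\dots,n\}$, $\mathcal S_n$ the set of permutations of $[n]$, $e_1,\dots,e_n$ the standard basis of $\mathbb R^n$. Time is discrete, $t=0,1,2,\dots$. There are $n$ single-server FIFO queues with infinite buffers; $\mathbf Q(t)\in\mathbb Z_{\ge0}^n$ is the queue-length vector at the start of slot $t$. Arrivals $A(t)\in\mathbb Z_{\ge0}$ are i.i.d. over $t$ with $E[A(1)]=n\lambda$, $\mathrm{Var}(A(1))=n\sigma_\lambda^2$, $A(1)\le nA_{\max}$ a.s. Potential services $\mathbf S(t)\in\mathbb Z_{\ge0}^n$ are i.i.d. over $t$, independent of arrivals, with $E[S_l(1)]=\mu_l>0$, $\mathrm{Var}(S_l(1))=\sigma_l^2$, $S_l(1)\le S_{\max}$ a.s., and $\mu_1\le\dots\le\mu_n$. All $A(t)$ arrivals of slot $t$ go to one queue, encoded by $\mathbf Z(t)\in\{e_1,\dots,e_n\}$, and $\mathbf Q(t+1)=[\mathbf Q(t)+A(t)\mathbf Z(t)-\mathbf S(t)]^+=\mathbf Q(t)+A(t)\mathbf Z(t)-\mathbf S(t)+\mathbf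 U(t)$, where $\mathbf U(t)\ge0$ is the unused service ($0\le U_l(t)\le S_l(t)$, $Q_l(t+1)U_l(t)=0$). Policy class $\Pi$. A policy is given by an integer $T\ge1$, a vector $\boldsymbol\gamma\in(0,\infty)^n$, a sorting map $L$ and a decision map $Y$. Let $\{V_k\},\{W_k\}$ be i.i.d. Unif$[0,1]$ sequences, independent of each other and of arrivals and services. At each sampling time $kT$ the dispatcher forms a permutation $\eta_k=L\big((Q_l(kT)/\gamma_l)_{l=1}^n,V_k\big)\in\mathcal S_n$ satisfying $Q_{\eta_k(1)}(kT)/\gamma_{\eta_k(1)}\ge\dots\ge Q_{\eta_k(n)}(kT)/\gamma_{\eta_k(n)}$ ($\eta_k(l)$ is the index of the $l$-th longest scaled queue), then draws $\phi(k)=Y(\eta_k,\boldsymbol\mu,W_k)=(\phi_1(k),\dots,\phi_T(k))\in\{e_1,\dots,e_n\}^T$, and sets $\mathbf Z(kT+j)=\phi_{j+1}(k)$ for $j=0,\dots,T-1$. The process $\mathbf X(t)=(\mathbf Q(t),\phi(\lfloor t/T\rfloor),t-T\lfloor t/T\rfloor)$ is a discrete-time Markov chain. Dispatching statistics. For $\eta\in\mathcal S_n$, $l\in[n]$, let $N_\eta(l)=\sum_{j=1}^T(\phi_j)_{\eta(l)}$ where $\phi=Y(\eta,\boldsymbol\mu,W)$, $W\sim$ Unif$[0,1]$. Define $f_{l,\eta}=E[N_\eta(l)/T]$; thus $f_{l,\eta}\ge0$ and $\sum_l f_{l,\eta}=1$. *)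

From HB Require Import structures.
From mathcomp Require Import all_boot all_order all_algebra all_fingroup.
From mathcomp Require Import reals.
Set Implicit Arguments. Unset Strict Implicit. Unset Printing Implicit Defensive.
Import Order.TTheory GRing.Theory Num.Theory.
Local Open Scope ring_scope.

Section Model.
Variable R : realType.

Definition is_distr (X : finType) (p : X -> R) : Prop :=
  (forall x, 0 <= p x) /\ \sum_(x : X) p x = 1.

Variables (n T Smax : nat).

(* service vectors take values in {0..Smax}^n *)
Definition svec := {ffun 'I_n -> 'I_Smax.+1}.

Definition mu (pS : svec -> R) (l : 'I_n) : R :=
  \sum_(s : svec) pS s * (val (s l))%:R.

(* mean number of arrivals per slot E[A(1)] = n * lambda *)
Definition arr_mean (Amax : nat) (pA : 'I_Amax.+1 -> R) : R :=
  \sum_(a : 'I_Amax.+1) pA a * (val a)%:R.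

Definition sorts (v : 'I_n -> R) (eta : 'S_n) : Prop :=
  forall i j : 'I_n, (i <= j)%N -> v (eta j) <= v (eta i).

(* law of L(v, V), V ~ Unif[0,1]: a distribution on S_n supported on
   permutations sorting v *)
Definition valid_sorting (pL : ('I_n -> R) -> 'S_n -> R) : Prop :=
  forall v, is_distr (pL v) /\ (forall eta, 0 < pL v eta -> sorts v eta).

(* dispatching decisions phi in {e_1..e_n}^T, encoded as 'I_T -> 'I_n *)
Definition dvec := {ffun 'I_T -> 'I_n}.

(* f_{l,eta} = E[N_eta(l)/T], phi ~ law of Y(eta, mu, W) *)
Definition fstat (pY : 'S_n -> dvec -> R) (l : 'I_n) (eta : 'S_n) : R :=
  \sum_(phi : dvec) pY eta phi * (#|[pred j | phi j == eta l]|%:R / T%:R).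

(* state of the chain X(t) = (Q(t), phi(floor(t/T)), t mod T) *)
Definition state := ({ffun 'I_n -> nat} * dvec * 'I_T)%type.

Definition ord0_of (r : 'I_T) : 'I_T :=
  Ordinal (leq_ltn_trans (leq0n r) (ltn_ord r)).

(* Q(t+1) = [Q(t) + A(t) e_z - S(t)]^+ *)
Definition qupd (q : {ffun 'I_n -> nat}) (z : 'I_n) (a : nat) (s : svec)
  : {ffun 'I_n -> nat} :=
  [ffun l => (q l + (if l == z then a else 0%N)) - val (s l)]%N.

Definition scaled (gamma : 'I_n -> R) (q : {ffun 'I_n -> nat}) : 'I_n -> R :=
  fun l => (q l)%:R / gamma l.

Variables (Amax : nat) (pA : 'I_Amax.+1 -> R) (pS : svec -> R)
  (gamma : 'I_n -> R) (pL : ('I_n -> R) -> 'S_n -> R) (pY : 'S_n -> dvec -> R).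

(* one-step transition operator: (Pstep g)(x) = E[g(X(t+1)) | X(t) = x] *)
Definition Pstep (g : state -> R) (x : state) : R :=
  let: (q, phi, r) := x in
  \sum_(a : 'I_Amax.+1) \sum_(s : svec) pA a * pS s *
    (let q' := qupd q (phi r) (val a) s in
     match (insub r.+1 : option 'I_T) with
     | Some r' => g (q', phi, r')
     | None => \sum_(eta : 'S_n) \sum_(phi' : dvec)
                 pL (scaled gamma q') eta * pY eta phi' * g (q', phi', ord0_of r)
     end).

(* no_hit C k x = P_x(X(1) \notin C, ..., X(k) \notin C) = P_x(tau_C^+ > k) *)
Fixpoint no_hit (C : seq state) (k : nat) (x : state) : R :=
  match k with
  | 0%N => 1
  | k'.+1 => Pstep (fun y => if y \in C then 0 else no_hit C k' y) x
  end.

(* positive recurrence (Foster sense): there is a finite set C of states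
   such that from every initial state x, E_x[tau_C^+] = sum_k P_x(tau_C^+ > k)
   is finite, where tau_C^+ = inf {t >= 1 : X(t) \in C}. *)
Definition positive_recurrent : Prop :=
  exists C : seq state, forall x : state, exists M : R,
    forall K : nat, \sum_(k < K) no_hit C k x <= M.

End Model.

(* Take V(q) = sum_l q_l^2 / gamma_l.  In a slot whose arrivals all join queue z,
   E[V(Q(t+1)) - V(Q(t))] <= c + 2 (s_z n lambda - sum_l s_l mu_l), with s = q / gamma.
   Summed over a frame of T slots and averaged over the decision vector, the
   arrival term becomes 2 n lambda T sum_k s_(eta k) f_(k,eta); as eta sorts s
   decreasingly and the prefix sums of f_(.,eta) are dominated by those of
   mu_(eta .) / sum mu, Abel summation bounds it by 2 n lambda T sum_l s_l mu_l / sum mu.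
   So the frame drift of V is at most c' - 2 T (1 - n lambda / sum mu) sum_l s_l mu_l,
   which is <= -T once some queue is long.  Then W(q, phi, r) = E[V at the end of
   the current frame] + (slots left in the frame) drifts by <= -1 per slot outside
   a finite set of states, and Foster's criterion applies. *)

From HB Require Import structures.
From mathcomp Require Import all_boot all_order all_algebra all_fingroup.
From mathcomp Require Import reals ring lra zify.
Import Order.TTheory GRing.Theory Num.Theory.
Local Open Scope ring_scope.
Set Implicit Arguments. Unset Strict Implicit. Unset Printing Implicit Defensive.

Lemma big_ord_ltS_recr (V : nmodType) n (p : 'I_n) (F : 'I_n -> V) :
  \sum_(k : 'I_n | (k < p.+1)%N) F k = \sum_(k : 'I_n | (k < p)%N) F k + F p.
Proof.
rewrite (bigD1 p) //= addrC; congr (_ + _); apply: eq_bigl => k.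
by rewrite ltnS -val_eqE; case: ltngtP.
Qed.

Lemma sum_weighted_prefix_le0 (R : realDomainType) n (f g s : 'I_n -> R) m :
  (m <= n)%N ->
  (forall m', (1 <= m' <= m)%N ->
     \sum_(k : 'I_n | (k < m')%N) f k <= \sum_(k : 'I_n | (k < m')%N) g k) ->
  (forall i j : 'I_n, (i <= j)%N -> (j < m)%N -> s j <= s i) ->
  (forall i : 'I_n, (i < m)%N -> 0 <= s i) ->
  \sum_(k : 'I_n | (k < m)%N) s k * (f k - g k) <= 0.
Proof.
elim: m s => [|m IH] s m_lt fg_prefix s_nonincr s_ge0; first by rewrite big_pred0.
pose p : 'I_n := Ordinal m_lt.
(* Split off the smallest weight [s p]; what remains has weights vanishing at [p]. *)
have -> : \sum_(k : 'I_n | (k < m.+1)%N) s k * (f k - g k) =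
    \sum_(k : 'I_n | (k < m.+1)%N) (s k - s p) * (f k - g k)
    + s p * \sum_(k : 'I_n | (k < m.+1)%N) (f k - g k).
  by rewrite mulr_sumr -big_split; apply: eq_bigr => k _ /=; ring.
rewrite (big_ord_ltS_recr p) subrr mul0r addr0.
apply: ler_wnDl.
  apply: IH => [|m' /andP[m'_ge1 m'_le]|i j ij jm|i im].
  - exact: ltnW.
  - by apply: fg_prefix; rewrite m'_ge1 (leq_trans m'_le).
  - by rewrite lerD2r s_nonincr // ltnW.
  - by rewrite subr_ge0 s_nonincr // ltnW.
apply: mulr_ge0_le0; first exact: s_ge0.
by rewrite sumrB subr_le0; apply: fg_prefix; rewrite leqnn.
Qed.

Lemma ler_sum_weighted_prefix (R : realDomainType) n (s f g : 'I_n -> R) :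
  (forall i j : 'I_n, (i <= j)%N -> s j <= s i) ->
  (forall i, 0 <= s i) ->
  (forall m, (1 <= m <= n)%N ->
     \sum_(k : 'I_n | (k < m)%N) f k <= \sum_(k : 'I_n | (k < m)%N) g k) ->
  \sum_k s k * f k <= \sum_k s k * g k.
Proof.
move=> s_nonincr s_ge0 fg_prefix.
have := sum_weighted_prefix_le0 (leqnn n) fg_prefix
  (fun i j ij _ => s_nonincr i j ij) (fun i _ => s_ge0 i).
rewrite (eq_bigl xpredT) => [weighted_le0|k]; last by rewrite ltn_ord.
by rewrite -subr_le0 -sumrB; under eq_bigr => k _ do rewrite -mulrBr.
Qed.

Lemma sqr_natr_addnBn_le (R : realDomainType) (x e s D : nat) :
  (e <= D)%N -> (s <= D)%N ->
  (((x + e) - s)%N%:R : R) ^+ 2 <=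
  x%:R ^+ 2 + D%:R ^+ 2 + 2 * x%:R * e%:R - 2 * x%:R * s%:R.
Proof.
rewrite -!(ler_nat R) => eD sD.
have e_ge0 : (0 : R) <= e%:R by [].
have s_ge0 : (0 : R) <= s%:R by [].
have x_ge0 : (0 : R) <= x%:R by [].
case: (leqP s (x + e)) => [sxe|xes].
  rewrite natrB // natrD; nra.
have xs : (x%:R : R) <= s%:R by rewrite ler_nat; lia.
rewrite (eqP (ltnW xes : (x + e - s == 0)%N)) expr0n /=; nra.
Qed.

Lemma natr_ub_finfun (R : archiRealDomainType) n (c : 'I_n -> R) :
  exists N : nat, forall l, c l <= N%:R.
Proof.
exists (\max_l Num.Def.archi_bound `|c l|)%N => l.
apply: le_trans (real_ler_norm (num_real (c l))) _.
apply: ltW; apply: lt_le_trans (archi_boundP (normr_ge0 _)) _.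
by rewrite ler_nat (leq_bigmax l).
Qed.

Lemma bounded_states_enum n T (M : nat) :
  exists C : seq (state n T),
    forall (q : {ffun 'I_n -> nat}) phi r,
    (forall l, (q l <= M)%N) -> (q, phi, r) \in C.
Proof.
pose bounded := ({ffun 'I_n -> 'I_M.+1} * dvec n T * 'I_T)%type.
exists [seq ([ffun l => val (x.1.1 l)], x.1.2, x.2) : state n T
          | x : bounded <- enum (@predT bounded)].
move=> q phi r q_le; apply/mapP.
exists ([ffun l => inord (q l)], phi, r); first by rewrite mem_enum.
by congr (_, _, _); apply/ffunP => l; rewrite !ffunE /= inordK ?ltnS.
Qed.

Section Foster.
Variables (R : realType) (n T Smax Amax : nat) (pA : 'I_Amax.+1 -> R)
  (pS : svec n Smax -> R) (gamma : 'I_n -> R)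
  (pL : ('I_n -> R) -> 'S_n -> R) (pY : 'S_n -> dvec n T -> R).
Hypotheses (pA_ge0 : forall a, 0 <= pA a) (pS_ge0 : forall s, 0 <= pS s)
  (pL_ge0 : forall v eta, 0 <= pL v eta) (pY_ge0 : forall eta phi, 0 <= pY eta phi).

Local Notation P := (Pstep pA pS gamma pL pY).

Lemma Pstep_le g1 g2 x : (forall y, g1 y <= g2 y) -> P g1 x <= P g2 x.
Proof.
move=> g12; case: x => [[q phi] r] /=.
apply: ler_sum => a _; apply: ler_sum => s _; rewrite ler_wpM2l ?mulr_ge0 //.
case: insub => [r'|]; first exact: g12.
apply: ler_sum => eta _; apply: ler_sum => phi' _.
by rewrite ler_wpM2l ?mulr_ge0.
Qed.

Lemma Pstep_ext g1 g2 x : (forall y, g1 y = g2 y) -> P g1 x = P g2 x.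
Proof. by move=> g12; apply/eqP; rewrite eq_le !Pstep_le // => y; rewrite g12. Qed.

Lemma PstepD g1 g2 x : P (fun y => g1 y + g2 y) x = P g1 x + P g2 x.
Proof.
case: x => [[q phi] r] /=.
rewrite -big_split; apply: eq_bigr => a _; rewrite -big_split; apply: eq_bigr => s _.
rewrite /= -mulrDr; congr (_ * _); case: insub => [r'|] //.
rewrite -big_split; apply: eq_bigr => eta _; rewrite -big_split.
by apply: eq_bigr => phi' _; rewrite mulrDr.
Qed.

Lemma Pstep0 x : P (fun _ => 0) x = 0.
Proof.
case: x => [[q phi] r] /=.
apply: big1 => a _; apply: big1 => s _; case: insub => [r'|]; first by rewrite mulr0.
by rewrite big1 ?mulr0 // => eta _; apply: big1 => phi' _; rewrite mulr0.
Qed.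

Lemma Pstep_sum K (F : nat -> state n T -> R) x :
  P (fun y => \sum_(k < K) F k y) x = \sum_(k < K) P (F k) x.
Proof.
elim: K => [|K IH].
  by rewrite big_ord0 -[RHS](Pstep0 x); apply: Pstep_ext => y; rewrite big_ord0.
rewrite big_ord_recr /= -IH -PstepD.
by apply: Pstep_ext => y; rewrite big_ord_recr.
Qed.

Lemma sum_no_hit_le (C : seq (state n T)) (W : state n T -> R) :
  (forall y, 0 <= W y) ->
  (forall y, y \notin C -> P W y <= W y - 1) ->
  forall K x, \sum_(k < K) no_hit pA pS gamma pL pY C k x <= 1 + P W x.
Proof.
move=> W_ge0 W_drift; elim=> [|K IH] x.
  by rewrite big_ord0 addr_ge0 // -(Pstep0 x) Pstep_le.
rewrite big_ord_recl lerD //=.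
rewrite -(Pstep_sum _ (fun k y => if y \in C then 0 else no_hit pA pS gamma pL pY C k y)).
apply: Pstep_le => y.
case: (boolP (y \in C)) => [_|yNC]; first by rewrite big1.
by apply: le_trans (IH y) _; have := W_drift y yNC; lra.
Qed.

End Foster.

Lemma qupd_le n Smax (q : {ffun 'I_n -> nat}) z a (s : svec n Smax) l :
  (qupd q z a s l <= q l + a)%N.
Proof. by rewrite ffunE; case: (l == z); lia. Qed.

Lemma qupd_ge n Smax (q : {ffun 'I_n -> nat}) z a (s : svec n Smax) l :
  (q l <= qupd q z a s l + Smax)%N.
Proof. by rewrite ffunE; have := ltn_ord (s l); case: (l == z) => /=; lia. Qed.

Section Drift.
Variables (R : realType) (n T Smax Amax : nat) (pA : 'I_Amax.+1 -> R)
  (pS : svec n Smax -> R) (gamma : 'I_n -> R)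
  (pL : ('I_n -> R) -> 'S_n -> R) (pY : 'S_n -> dvec n T -> R).
Hypotheses (pA_distr : is_distr pA) (pS_distr : is_distr pS)
  (gamma_gt0 : forall l, 0 < gamma l) (mu_gt0 : forall l, 0 < mu pS l).

Local Notation lam := (arr_mean pA).
Local Notation sc := (scaled gamma).

Definition Eslot (F : 'I_Amax.+1 -> svec n Smax -> R) : R :=
  \sum_a \sum_s pA a * pS s * F a s.

Lemma Eslot_le F G : (forall a s, F a s <= G a s) -> Eslot F <= Eslot G.
Proof.
move=> FG; apply: ler_sum => a _; apply: ler_sum => s _.
by rewrite ler_wpM2l ?mulr_ge0 ?pA_distr.1 ?pS_distr.1.
Qed.

Lemma EslotD F G : Eslot (fun a s => F a s + G a s) = Eslot F + Eslot G.
Proof.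
rewrite -big_split; apply: eq_bigr => a _; rewrite -big_split.
by apply: eq_bigr => s _; rewrite mulrDr.
Qed.

Lemma Eslot_arrival (f : 'I_Amax.+1 -> R) :
  Eslot (fun a _ => f a) = \sum_a pA a * f a.
Proof.
apply: eq_bigr => a _; rewrite -[RHS]mulr1 -pS_distr.2 !mulr_sumr.
by apply: eq_bigr => s _; ring.
Qed.

Lemma Eslot_service (g : svec n Smax -> R) :
  Eslot (fun _ s => g s) = \sum_s pS s * g s.
Proof.
rewrite /Eslot exchange_big; apply: eq_bigr => s _.
by rewrite -[RHS]mul1r -pA_distr.2 !mulr_suml; apply: eq_bigr => a _; ring.
Qed.

Lemma Eslot_cst c : Eslot (fun _ _ => c) = c.
Proof. by rewrite Eslot_arrival -mulr_suml pA_distr.2 mul1r. Qed.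

Lemma arr_mean_ge0 : 0 <= lam.
Proof. by apply: sumr_ge0 => a _; rewrite mulr_ge0 ?pA_distr.1. Qed.

Lemma scaled_ge0 q l : 0 <= sc q l.
Proof. exact: divr_ge0 (ler0n _ _) (ltW (gamma_gt0 l)). Qed.

Definition lyap (q : {ffun 'I_n -> nat}) : R := \sum_l (q l)%:R ^+ 2 / gamma l.

Definition wservice (q : {ffun 'I_n -> nat}) : R := \sum_l sc q l * mu pS l.

Definition slot_drift (z : 'I_n) q : R := sc q z * lam - wservice q.

Definition lyap_const : R := \sum_l (Amax + Smax)%:R ^+ 2 / gamma l.

Definition drift_shift_const : R :=
  Amax%:R * lam * \sum_l (gamma l)^-1 + Smax%:R * \sum_l mu pS l / gamma l.

Lemma lyap_const_ge0 : 0 <= lyap_const.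
Proof. by apply: sumr_ge0 => l _; rewrite divr_ge0 ?sqr_ge0 ?(ltW (gamma_gt0 l)). Qed.

Lemma drift_shift_const_ge0 : 0 <= drift_shift_const.
Proof.
rewrite addr_ge0 ?mulr_ge0 ?arr_mean_ge0 //.
- by apply: sumr_ge0 => l _; rewrite invr_ge0 (ltW (gamma_gt0 l)).
- by apply: sumr_ge0 => l _; rewrite divr_ge0 ?(ltW (mu_gt0 l)) ?(ltW (gamma_gt0 l)).
Qed.

Lemma wservice_ge q l : sc q l * mu pS l <= wservice q.
Proof.
rewrite /wservice (bigD1 l) //= lerDl; apply: sumr_ge0 => k _.
by rewrite mulr_ge0 ?scaled_ge0 ?(ltW (mu_gt0 k)).
Qed.

Lemma lyap_qupd_le q z (a : 'I_Amax.+1) (s : svec n Smax) :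
  lyap (qupd q z a s) <=
  lyap q + lyap_const + 2 * (sc q z * (val a)%:R)
    - 2 * \sum_l sc q l * (val (s l))%:R.
Proof.
pose e l := if l == z then val a else 0%N.
have -> : sc q z * (val a)%:R = \sum_l sc q l * (e l)%:R.
  by rewrite (bigD1 z) //= /e eqxx big1 ?addr0 // => l /negbTE ->; rewrite mulr0.
rewrite !mulr_sumr -!big_split -sumrB; apply: ler_sum => l _.
have eD : (e l <= Amax + Smax)%N by rewrite /e /=; case: eqP => _; have := ltn_ord a; lia.
have sD : (val (s l) <= Amax + Smax)%N by have := ltn_ord (s l); rewrite /=; lia.
have gamma_inv_ge0 : 0 <= (gamma l)^-1 by rewrite invr_ge0 (ltW (gamma_gt0 l)).
rewrite ffunE /= -/(e l).
apply: le_trans (ler_wpM2r gamma_inv_ge0 (sqr_natr_addnBn_le R (q l) eD sD)) _.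
by rewrite /scaled; lra.
Qed.

Lemma mean_wservice q :
  \sum_s pS s * \sum_l sc q l * (val (s l))%:R = wservice q.
Proof.
under eq_bigr => s _ do rewrite mulr_sumr.
rewrite exchange_big; apply: eq_bigr => l _ /=.
by rewrite /mu mulr_sumr; apply: eq_bigr => s _; ring.
Qed.

Lemma Elyap_qupd_le q z :
  Eslot (fun a s => lyap (qupd q z (val a) s)) <=
  lyap q + lyap_const + 2 * slot_drift z q.
Proof.
apply: le_trans (Eslot_le (lyap_qupd_le q z)) _.
rewrite 2!EslotD Eslot_cst Eslot_arrival Eslot_service.
have -> : \sum_a pA a * (2 * (sc q z * (val a)%:R)) = 2 * sc q z * lam.
  by rewrite /arr_mean mulr_sumr; apply: eq_bigr => a _; ring.
have -> : \sum_s pS s * - (2 * \sum_l sc q l * (val (s l))%:R) = - (2 * wservice q).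
  by rewrite -mean_wservice mulr_sumr -sumrN; apply: eq_bigr => s _; ring.
rewrite /slot_drift; lra.
Qed.

Lemma scaled_qupd_le q z (a : 'I_Amax.+1) (s : svec n Smax) l :
  sc (qupd q z a s) l <= sc q l + Amax%:R / gamma l.
Proof.
rewrite /scaled -mulrDl ler_wpM2r ?invr_ge0 ?(ltW (gamma_gt0 l)) // -natrD ler_nat.
by apply: leq_trans (qupd_le _ _ _ _ _) _; rewrite leq_add2l -ltnS.
Qed.

Lemma scaled_qupd_ge q z (a : 'I_Amax.+1) (s : svec n Smax) l :
  sc q l <= sc (qupd q z a s) l + Smax%:R / gamma l.
Proof.
by rewrite /scaled -mulrDl ler_wpM2r ?invr_ge0 ?(ltW (gamma_gt0 l)) // -natrD ler_nat qupd_ge.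
Qed.

Lemma slot_drift_qupd_le q z (a : 'I_Amax.+1) (s : svec n Smax) z' :
  slot_drift z' (qupd q z a s) <= slot_drift z' q + drift_shift_const.
Proof.
have arrival_le : sc (qupd q z a s) z' <= sc q z' + Amax%:R * \sum_l (gamma l)^-1.
  apply: le_trans (scaled_qupd_le q z a s z') _; rewrite lerD2l ler_wpM2l //.
  by rewrite (bigD1 z') //= lerDl; apply: sumr_ge0 => l _; rewrite invr_ge0 (ltW (gamma_gt0 l)).
have service_ge : wservice q <=
    wservice (qupd q z a s) + Smax%:R * \sum_l mu pS l / gamma l.
  rewrite /wservice mulr_sumr -big_split; apply: ler_sum => l _ /=.
  have := ler_wpM2r (ltW (mu_gt0 l)) (scaled_qupd_ge q z a s l).
  by rewrite mulrDl; lra.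
have := ler_wpM2r arr_mean_ge0 arrival_le.
rewrite /slot_drift /drift_shift_const; lra.
Qed.

Lemma sum_slot_drift_qupd_le (zs : seq 'I_n) q z (a : 'I_Amax.+1) (s : svec n Smax) :
  \sum_(z' <- zs) slot_drift z' (qupd q z a s) <=
  \sum_(z' <- zs) slot_drift z' q + (size zs)%:R * drift_shift_const.
Proof.
elim: zs => [|z' zs IH]; first by rewrite !big_nil mul0r addr0.
rewrite !big_cons /= -natr1.
have := slot_drift_qupd_le q z a s z'; lra.
Qed.

Fixpoint Elyap_after (zs : seq 'I_n) (q : {ffun 'I_n -> nat}) : R :=
  if zs is z :: zs' then Eslot (fun a s => Elyap_after zs' (qupd q z (val a) s))
  else lyap q.

Lemma Elyap_after_ge0 zs q : 0 <= Elyap_after zs q.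
Proof.
elim: zs q => [|z zs IH] q /=.
  by apply: sumr_ge0 => l _; rewrite divr_ge0 ?sqr_ge0 ?(ltW (gamma_gt0 l)).
by rewrite -(Eslot_cst 0) Eslot_le.
Qed.

Lemma Elyap_after_le zs q :
  Elyap_after zs q <= lyap q + 2 * \sum_(z <- zs) slot_drift z q
    + ((size zs)%:R * lyap_const + 2 * (size zs)%:R ^+ 2 * drift_shift_const).
Proof.
elim: zs q => [|z zs IH] q /=; first by rewrite big_nil expr0n /=; lra.
pose k : R := (size zs)%:R; pose c := k * lyap_const + 2 * k ^+ 2 * drift_shift_const.
have step (a : 'I_Amax.+1) (s : svec n Smax) : Elyap_after zs (qupd q z (val a) s) <=
    lyap (qupd q z (val a) s) + (2 * \sum_(z' <- zs) slot_drift z' q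
      + 2 * k * drift_shift_const + c).
  apply: le_trans (IH _) _; have := sum_slot_drift_qupd_le zs q z a s.
  rewrite /c /k; lra.
apply: le_trans (Eslot_le step) _.
rewrite EslotD Eslot_cst; apply: le_trans (lerD (Elyap_qupd_le q z) (lexx _)) _.
have k_ge0 : 0 <= k by [].
have := lyap_const_ge0; have := drift_shift_const_ge0.
rewrite big_cons -natr1 -/k /c; nra.
Qed.

Definition decisions (phi : dvec n T) : seq 'I_n := [seq phi i | i <- enum 'I_T].

Lemma size_decisions phi : size (decisions phi) = T.
Proof. by rewrite size_map size_enum_ord. Qed.

Lemma drop_decisions phi (r : 'I_T) :
  drop r (decisions phi) = phi r :: drop r.+1 (decisions phi).
Proof.
rewrite (drop_nth (phi r)) ?size_decisions //.
by rewrite (nth_map r) ?size_enum_ord // nth_ord_enum.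
Qed.

Lemma sum_decisions phi (f : 'I_n -> R) :
  \sum_(z <- decisions phi) f z = \sum_(i : 'I_T) f (phi i).
Proof. by rewrite big_map big_enum. Qed.

Local Notation mu_sum := (\sum_l mu pS l).

Definition frame_const : R := T%:R * lyap_const + 2 * T%:R ^+ 2 * drift_shift_const.

Lemma Elyap_frame_le q phi :
  Elyap_after (decisions phi) q <=
  lyap q + frame_const + 2 * lam * \sum_(i : 'I_T) sc q (phi i)
    - 2 * T%:R * wservice q.
Proof.
apply: le_trans (Elyap_after_le _ q) _.
rewrite size_decisions /slot_drift big_split /= sumrN !sum_decisions.
rewrite sumr_const card_ord -mulr_natl -mulr_suml /frame_const; lra.
Qed.

Hypothesis T_gt0 : (0 < T)%N.

Lemma mean_sum_decisions (eta : 'S_n) (f : 'I_n -> R) :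
  \sum_phi pY eta phi * \sum_(i : 'I_T) f (phi i) =
  T%:R * \sum_k f (eta k) * fstat pY k eta.
Proof.
have T_neq0 : (T%:R : R) != 0 by rewrite pnatr_eq0 -lt0n.
have count_decisions phi : \sum_(i : 'I_T) f (phi i) =
    \sum_k f (eta k) * #|[pred j | phi j == eta k]|%:R.
  rewrite (partition_big phi xpredT) // (reindex_inj (@perm_inj _ eta)) /=.
  apply: eq_bigr => k _; rewrite (eq_bigr (fun _ => f (eta k))) => [|i /eqP -> //].
  by rewrite sumr_const mulr_natr.
under eq_bigr => phi _ do rewrite count_decisions mulr_sumr.
rewrite exchange_big mulr_sumr; apply: eq_bigr => k _ /=.
rewrite /fstat !mulr_sumr; apply: eq_bigr => phi _; by field.
Qed.

Hypothesis fstat_prefix : forall (eta : 'S_n) (m : nat), (1 <= m <= n)%N ->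
  \sum_(l : 'I_n | (l < m)%N) fstat pY l eta
    <= (\sum_(l : 'I_n | (l < m)%N) mu pS (eta l)) / mu_sum.

Lemma sorted_fstat_le (eta : 'S_n) q : sorts (sc q) eta ->
  \sum_k sc q (eta k) * fstat pY k eta <= wservice q / mu_sum.
Proof.
move=> eta_sorts; rewrite /wservice mulr_suml [X in _ <= X](reindex_inj (@perm_inj _ eta)) /=.
under [X in _ <= X]eq_bigr => k _ do rewrite -mulrA.
apply: ler_sum_weighted_prefix => [i j ij|i|m m_range]; first exact: eta_sorts.
  exact: scaled_ge0.
by rewrite -mulr_suml; apply: fstat_prefix.
Qed.

Hypotheses (pL_valid : valid_sorting pL) (pY_distr : forall eta, is_distr (pY eta)).

Definition Eframe (v : 'I_n -> R) (F : 'S_n -> dvec n T -> R) : R :=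
  \sum_eta \sum_phi pL v eta * pY eta phi * F eta phi.

Lemma Eframe_le v F G :
  (forall eta phi, F eta phi <= G eta phi) -> Eframe v F <= Eframe v G.
Proof.
move=> FG; apply: ler_sum => eta _; apply: ler_sum => phi _.
by rewrite ler_wpM2l ?mulr_ge0 ?(pL_valid v).1.1 ?(pY_distr eta).1.
Qed.

Lemma Eframe_addr v F c :
  Eframe v (fun eta phi => F eta phi + c) = Eframe v F + c.
Proof.
have Eframe_cst : Eframe v (fun _ _ => c) = c.
  rewrite -[RHS]mul1r -(pL_valid v).1.2 mulr_suml; apply: eq_bigr => eta _.
  by rewrite -[RHS]mul1r -(pY_distr eta).2 !mulr_suml; apply: eq_bigr => phi _; ring.
rewrite -[c in RHS]Eframe_cst -big_split; apply: eq_bigr => eta _ /=.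
by rewrite -big_split; apply: eq_bigr => phi _ /=; rewrite mulrDr.
Qed.

Lemma Eframe_lyap_le q :
  Eframe (sc q) (fun _ phi => Elyap_after (decisions phi) q) <=
  lyap q + frame_const - 2 * T%:R * (1 - lam / mu_sum) * wservice q.
Proof.
set bound := _ - _.
have -> : bound = \sum_eta pL (sc q) eta * bound.
  by rewrite -mulr_suml (pL_valid _).1.2 mul1r.
apply: ler_sum => eta _; under eq_bigr do rewrite -mulrA; rewrite -mulr_sumr.
have := (pL_valid (sc q)).1.1 eta; rewrite le_eqVlt => /predU1P[<-|pL_gt0].
  by rewrite !mul0r.
rewrite ler_pM2l //; set a := lyap q + frame_const - 2 * T%:R * wservice q.
have mean_eq : \sum_phi pY eta phi * (a + 2 * lam * \sum_(i : 'I_T) sc q (phi i)) =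
    a + 2 * lam * (T%:R * \sum_k sc q (eta k) * fstat pY k eta).
  rewrite -mean_sum_decisions mulr_sumr -[a in RHS]mul1r -(pY_distr eta).2.
  by rewrite mulr_suml -big_split; apply: eq_bigr => phi _ /=; ring.
apply: le_trans (_ : _ <= \sum_phi pY eta phi * (a + 2 * lam * \sum_(i : 'I_T) sc q (phi i))) _.
  apply: ler_sum => phi _; rewrite ler_wpM2l ?(pY_distr eta).1 //.
  by apply: le_trans (Elyap_frame_le q phi) _; rewrite /a; lra.
have lamT_ge0 : 0 <= 2 * lam * T%:R by rewrite !mulr_ge0 ?arr_mean_ge0.
have := ler_wpM2l lamT_ge0 (sorted_fstat_le ((pL_valid (sc q)).2 eta pL_gt0)).
rewrite mean_eq /bound /a; lra.
Qed.

Lemma Eframe_lyap_drift : lam < mu_sum ->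
  exists N : nat, forall (q : {ffun 'I_n -> nat}) l, (N < q l)%N ->
    Eframe (sc q) (fun _ phi => Elyap_after (decisions phi) q) <= lyap q - T%:R.
Proof.
move=> lam_lt; set delta := 1 - lam / mu_sum.
have mu_sum_gt0 : 0 < mu_sum := le_lt_trans arr_mean_ge0 lam_lt.
have delta_gt0 : 0 < delta by rewrite subr_gt0 ltr_pdivrMr // mul1r.
pose rate l := 2 * T%:R * delta * (mu pS l / gamma l).
have [N N_ub] := natr_ub_finfun (fun l => (frame_const + T%:R) / rate l).
exists N => q l N_lt; apply: le_trans (Eframe_lyap_le q) _; rewrite -/delta.
have rate_gt0 : 0 < rate l by rewrite /rate !mulr_gt0 ?ltr0n ?invr_gt0 ?mu_gt0 ?gamma_gt0.
have : frame_const + T%:R <= (q l)%:R * rate l.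
  by rewrite -ler_pdivrMr //; apply: le_trans (N_ub l) _; rewrite ler_nat ltnW.
have deltaT_ge0 : 0 <= 2 * T%:R * delta by rewrite ltW // !mulr_gt0 ?ltr0n.
have := ler_wpM2l deltaT_ge0 (wservice_ge q l).
rewrite /rate /scaled; lra.
Qed.

Definition frame_lyap (x : state n T) : R :=
  let: (q, phi, r) := x in Elyap_after (drop r (decisions phi)) q + (T - r.+1)%:R.

Lemma frame_lyap_ge0 x : 0 <= frame_lyap x.
Proof. by case: x => [[q phi] r]; rewrite addr_ge0 ?Elyap_after_ge0. Qed.

Lemma PstepE g q phi (r : 'I_T) :
  Pstep pA pS gamma pL pY g (q, phi, r) =
  Eslot (fun a s => let q' := qupd q (phi r) (val a) s in
    if insub r.+1 is Some r' then g (q', phi, r')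
    else Eframe (sc q') (fun _ phi' => g (q', phi', ord0_of r))).
Proof. by []. Qed.

Lemma frame_lyap_drift N (q : {ffun 'I_n -> nat}) (phi : dvec n T) (r : 'I_T) l :
  (forall (q' : {ffun 'I_n -> nat}) l', (N < q' l')%N ->
     Eframe (sc q') (fun _ phi' => Elyap_after (decisions phi') q') <= lyap q' - T%:R) ->
  (N + Smax < q l)%N ->
  Pstep pA pS gamma pL pY frame_lyap (q, phi, r) <= frame_lyap (q, phi, r) - 1.
Proof.
move=> frame_drift q_large; rewrite PstepE /= drop_decisions /=.
case: insubP => [r' _ r'_eq|r_last] /=.
  rewrite r'_eq EslotD Eslot_cst.
  have -> : (T - r.+1 = (T - r.+2).+1)%N by have := ltn_ord r'; rewrite r'_eq; lia.
  by rewrite -natr1; lra.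
have r_eq : r.+1 = T by have := ltn_ord r; lia.
rewrite r_eq subnn drop_oversize ?size_decisions // addr0 /=.
apply: le_trans (Eslot_le (G := fun a s => lyap (qupd q (phi r) (val a) s) - 1) _) _;
  last by rewrite EslotD Eslot_cst.
move=> a s; set q' := qupd _ _ _ _.
have q'_large : (N < q' l)%N by have := qupd_ge q (phi r) a s l; rewrite -/q'; lia.
apply: le_trans (Eframe_le (sc q') (G := fun _ phi' =>
  Elyap_after (decisions phi') q' + (T - 1)%:R) _) _; first by move=> eta phi'; rewrite drop0.
by rewrite Eframe_addr natrB //; have := frame_drift _ _ q'_large; lra.
Qed.

End Drift.

Unset Implicit Arguments.

Theorem corollary1 (R : realType) (n Smax : nat)
    (pS : svec n Smax -> R) (T : nat) (gamma : 'I_n -> R)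
    (pL : ('I_n -> R) -> 'S_n -> R) (pY : 'S_n -> dvec n T -> R) :
  (0 < n)%N -> (0 < T)%N ->
  is_distr pS ->
  (forall l, 0 < mu pS l) ->
  (forall i j : 'I_n, (i <= j)%N -> mu pS i <= mu pS j) ->
  (forall l, 0 < gamma l) ->
  valid_sorting pL ->
  (forall eta, is_distr (pY eta)) ->
  (forall (eta : 'S_n) (m : nat), (1 <= m <= n)%N ->
     \sum_(l : 'I_n | (l < m)%N) fstat pY l eta
       <= (\sum_(l : 'I_n | (l < m)%N) mu pS (eta l)) / (\sum_(l : 'I_n) mu pS l)) ->
  forall (Amax : nat) (pA : 'I_Amax.+1 -> R),
    is_distr pA ->
    arr_mean pA < \sum_(l : 'I_n) mu pS l ->
    positive_recurrent pA pS gamma pL pY.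
Proof.
(* [0 < n] follows from the load condition, and the order of the [mu l] is
   irrelevant because the dispatching condition holds for every permutation. *)
move=> _ T_gt0 pS_distr mu_gt0 _ gamma_gt0 pL_valid pY_distr fstat_prefix
  Amax pA pA_distr lam_lt.
have [N frame_drift] := Eframe_lyap_drift pA_distr pS_distr gamma_gt0 mu_gt0
  T_gt0 fstat_prefix pL_valid pY_distr lam_lt.
have [C C_bounded] := bounded_states_enum n T (N + Smax).
exists C => x; exists (1 + Pstep pA pS gamma pL pY (frame_lyap pA pS gamma) x) => K.
apply: sum_no_hit_le => [a|s|v eta|eta phi|y|[[q phi] r] xNC].
- exact: pA_distr.1 a.
- exact: pS_distr.1 s.
- exact: (pL_valid v).1.1 eta.
- exact: (pY_distr eta).1 phi.
- exact: frame_lyap_ge0.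
have [l q_large] : exists l, (N + Smax < q l)%N.
  apply/existsP; apply: contraR xNC => /existsPn q_small.
  by apply: C_bounded => l; rewrite leqNgt q_small.
exact: frame_lyap_drift frame_drift q_large.
Qed.
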